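(* Let $(T_n)$ be a sequence of tournaments with $|T_n|\to\infty$ such that $c_3=\lim\mathbf{pr}(C_3,T_n)$ and $c_4=\lim\mathbf{pr}(C_4,T_n)$ exist. If $c_3\ge\frac1{16}$ then $c_4\ge\frac3{64}$. In particular, the balanced random blow-up of the transitive tournament $T_2$ (which has $c_3=\frac1{16}$ and $c_4=\frac3{64}$) minimizes $c_4$ among all such sequences with $c_3=\frac1{16}$.
   Context: For tournaments $T,H$, $\mathbf{pr}(H,T)$ denotes the probability that a uniformly random set of $|H|$ vertices of $T$ spans a subtournament isomorphic to $H$. $C_3$ is the cyclically oriented triangle, $C_4$ is the $4$-vertex tournament containing a directed Hamiltonian $4$-cycle, and $T_m$ is the transitive $m$-vertex tournament. The balanced random blow-up of a $k$-vertex tournament $H$ is the sequence whose $n$-th member has vertex set $V_1\sqcup\dots\sqcup V_k$ with $|V_i|=\lfloor n/k\rfloor$, all edges directed from $V_i$ to $V_j$ whenever $i\to j$ in $H$, and a uniformly random tournament on each $V_i$ (limits taken almost surely). *)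

From mathcomp Require Import all_boot.
From Stdlib Require Import Reals.

Set Implicit Arguments.
Unset Strict Implicit.
Unset Printing Implicit Defensive.

(* A tournament on the vertex set 'I_m (every finite tournament is isomorphic
   to one of this form): irreflexive, and for distinct vertices exactly one
   of the two arcs is present. *)
Definition is_tournament (m : nat) (t : rel 'I_m) : Prop :=
  (forall i : 'I_m, ~~ t i i) /\
  (forall i j : 'I_m, i != j -> t i j = ~~ t j i).

Definition spans_copy (k m : nat) (h : rel 'I_k) (t : rel 'I_m)
  (S : {set 'I_m}) : bool :=
  [exists f : {ffun 'I_k -> 'I_m},
     [&& injectiveb f, S == [set f x | x : 'I_k] &
         [forall i : 'I_k, [forall j : 'I_k, h i j == t (f i) (f j)]]]].

Definition ncopies (k m : nat) (h : rel 'I_k) (t : rel 'I_m) : nat :=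
  #|[set S : {set 'I_m} | (#|S| == k) && spans_copy h t S]|.

Definition pr (k m : nat) (h : rel 'I_k) (t : rel 'I_m) : R :=
  (INR (ncopies h t) / INR 'C(m, k))%R.

Definition C3 : rel 'I_3 :=
  fun i j => ((nat_of_ord i, nat_of_ord j) \in [:: (0, 1); (1, 2); (2, 0)]).

(* C_4: the 4-vertex tournament with directed Hamiltonian cycle
   0 -> 1 -> 2 -> 3 -> 0 and diagonals 0 -> 2, 1 -> 3
   (the unique strongly connected 4-vertex tournament up to isomorphism) *)
Definition C4 : rel 'I_4 :=
  fun i j => ((nat_of_ord i, nat_of_ord j) \in
                [:: (0, 1); (1, 2); (2, 3); (3, 0); (0, 2); (1, 3)]).

(* Write d(v) for the out-degree of v and N(u, v) for the number of cyclic
   triangles through the arc u -> v of an m-vertex tournament.  Summing the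
   square of m + 2 (d(v) - d(u)) - 8 N(u, v) over all arcs u -> v and expanding
   with the classical degree identities gives
     80 m K <= m^2 (m - 1) (m - 2) + 384 (K + D),
   where K counts ordered cyclic triples and D counts ordered pairs of distinct
   cyclic triangles sharing an arc.  Now K >= 3 #C3, and such a pair spans a C4,
   each C4 carrying at most two of them; dividing by 6 m C(m, 3) yields
   40 pr(C3) <= 32 pr(C4) + 1 + 192 / m.  Letting m -> oo gives
   40 c3 <= 32 c4 + 1, so c3 >= 1/16 forces c4 >= 3/64. *)

From mathcomp Require Import all_boot.
From Stdlib Require Import Reals Lra Lia.
From mathcomp Require ssralg ssrnum ssrint ring zify.

Set Implicit Arguments.
Unset Strict Implicit.
Unset Printing Implicit Defensive.

Lemma card_fibers (X Y : finType) (P : pred X) (f : X -> Y) :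
  #|[set x | P x]| = \sum_y #|[set x | P x && (f x == y)]|.
Proof.
rewrite -sum1dep_card (partition_big f xpredT) //=.
by apply: eq_bigr => y _; rewrite sum1dep_card.
Qed.

Lemma spans_copy_card k m (h : rel 'I_k) (t : rel 'I_m) S :
  spans_copy h t S -> #|S| = k.
Proof.
by case/existsP=> f /and3P[/injectiveP f_inj /eqP -> _]; rewrite card_imset // card_ord.
Qed.

Definition cyclic_triple m (t : rel 'I_m) (x : 'I_m * 'I_m * 'I_m) : bool :=
  let: (u, v, w) := x in [&& t u v, t v w & t w u].

Definition cyclic_diamond m (t : rel 'I_m) (x : 'I_m * 'I_m * 'I_m * 'I_m) : bool :=
  let: (u, v, w, z) := x in [&& z != w, t u v, t v w, t w u, t v z & t z u].

Definition triple_set m (x : 'I_m * 'I_m * 'I_m) : {set 'I_m} :=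
  let: (u, v, w) := x in [set u; v; w].

Definition quad_set m (x : 'I_m * 'I_m * 'I_m * 'I_m) : {set 'I_m} :=
  let: (u, v, w, z) := x in [set u; v; w; z].

Section CountingCopies.

Variables (m : nat) (t : rel 'I_m).
Hypothesis Ht : is_tournament t.

Lemma tournament_irrefl a : t a a = false.
Proof. exact: negbTE (Ht.1 a). Qed.

Lemma tournament_antisym a b : t a b -> t b a = false.
Proof.
have [-> | neq_ab] := eqVneq a b; first by rewrite tournament_irrefl.
by rewrite (Ht.2 _ _ neq_ab) => /negbTE.
Qed.

Lemma tournament_total a b : a != b -> ~~ t a b -> t b a.
Proof. by move=> neq_ab; rewrite (Ht.2 _ _ neq_ab) negbK. Qed.

Lemma tournament_arc_neq a b : t a b -> (a == b) = false.
Proof. by apply: contraTF => /eqP ->; rewrite tournament_irrefl. Qed.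

Ltac arc_contra :=
  match goal with
  | H : is_true (t ?a ?a) |- _ => by rewrite tournament_irrefl in H
  | H1 : is_true (t ?a ?b), H2 : is_true (t ?b ?a) |- _ =>
      by rewrite (tournament_antisym H1) in H2
  end.

Lemma cyclic_triple_fiber S : spans_copy C3 t S ->
  3 <= #|[set x | cyclic_triple t x && (triple_set x == S)]|.
Proof.
case/existsP=> f /and3P[/injectiveP _ /eqP->{S} /forallP f_hom].
have arcE i j : t (f i) (f j) = C3 i j by move/forallP/(_ j)/eqP: (f_hom i).
pose a := f (inord 0); pose b := f (inord 1); pose c := f (inord 2).
have ab : t a b by rewrite arcE /C3 !inordK.
have bc : t b c by rewrite arcE /C3 !inordK.
have ca : t c a by rewrite arcE /C3 !inordK.
have -> : [set f i | i : 'I_3] = [set a; b; c].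
  apply/setP=> y; rewrite !inE; apply/imsetP/idP => [[[[|[|[|i]]] lt_i3] _ ->] //|].
  - by rewrite /a (_ : inord 0 = Ordinal lt_i3) ?eqxx //; apply: val_inj; rewrite /= inordK.
  - by rewrite /b (_ : inord 1 = Ordinal lt_i3) ?eqxx ?orbT //; apply: val_inj; rewrite /= inordK.
  - by rewrite /c (_ : inord 2 = Ordinal lt_i3) ?eqxx ?orbT //; apply: val_inj; rewrite /= inordK.
  by move=> /orP[/orP[]|] /eqP->; eexists.
have rotations_uniq : uniq [:: (a, b, c); (b, c, a); (c, a, b)].
  rewrite /= !inE !xpair_eqE (eq_sym b a) (eq_sym c b) (eq_sym a c).
  by rewrite !(tournament_arc_neq ab, tournament_arc_neq bc, tournament_arc_neq ca).
rewrite -[3]/(size [:: (a, b, c); (b, c, a); (c, a, b)]) -(card_uniqP rotations_uniq).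
apply/subset_leq_card/subsetP => x.
rewrite !inE => /or3P[] /eqP-> /=; rewrite ab bc ca /=; apply/eqP/setP => y;
  by rewrite !inE; case: (y == a); case: (y == b); case: (y == c).
Qed.

Lemma cyclic_triple_count : 3 * ncopies C3 t <= #|[set x | cyclic_triple t x]|.
Proof.
rewrite /ncopies; set copies := [set S : {set 'I_m} | _].
rewrite mulnC -sum_nat_const (card_fibers _ (@triple_set m)) [X in _ <= X](bigID (mem copies)) /=.
apply: (leq_trans _ (leq_addr _ _)).
by apply: leq_sum => S; rewrite inE => /andP[_]; apply: cyclic_triple_fiber.
Qed.

Lemma spans_C4_of_arcs a b c d : t a b -> t b c -> t c d -> t d a -> t a c -> t b d ->
  spans_copy C4 t [set a; b; c; d].
Proof.
move=> ab bc cd da ac bd.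
apply/existsP; exists [ffun i : 'I_4 => nth a [:: a; b; c; d] i]; apply/and3P; split.
- apply/injectiveP=> [[[|[|[|[|i]]]] lt_i4]] // [[|[|[|[|j]]]] lt_j4] //;
    rewrite !ffunE /= => eq_ij; first [exact: val_inj | subst; arc_contra].
- apply/eqP/setP=> y; rewrite !inE; apply/idP/imsetP => [|[[[|[|[|[|i]]]] ?] _ ->]];
    rewrite ?ffunE ?eqxx ?orbT //.
  move=> /orP[/orP[/orP[]|]|] /eqP->.
  + by exists (Ordinal (isT : 0 < 4)); rewrite // ffunE.
  + by exists (Ordinal (isT : 1 < 4)); rewrite // ffunE.
  + by exists (Ordinal (isT : 2 < 4)); rewrite // ffunE.
  + by exists (Ordinal (isT : 3 < 4)); rewrite // ffunE.
- apply/forallP=> [[[|[|[|[|i]]]] ?]]; apply/forallP=> [[[|[|[|[|j]]]] ?]];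
    by rewrite // !ffunE /C4 /= ?(ab, bc, cd, da, ac, bd, tournament_irrefl, tournament_antisym ab,
      tournament_antisym bc, tournament_antisym cd, tournament_antisym da,
      tournament_antisym ac, tournament_antisym bd).
Qed.

(* Depending on the orientation of the arc between w and z, a diamond is the
   4-cycle v -> w -> z -> u -> v or v -> z -> w -> u -> v. *)
Lemma cyclic_diamond_spans_C4 x : cyclic_diamond t x -> spans_copy C4 t (quad_set x).
Proof.
case: x => [[[u v] w] z] /and3P[neq_zw uv /and4P[vw wu vz zu]] /=.
have [wz | zw] := boolP (t w z).
  have -> : [set u; v; w; z] = [set v; w; z; u].
    by apply/setP=> y; rewrite !inE; case: (y == u); case: (y == v); case: (y == w); case: (y == z).
  exact: spans_C4_of_arcs.
have {}zw : t z w by apply: tournament_total; rewrite // eq_sym.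
have -> : [set u; v; w; z] = [set v; z; w; u].
  by apply/setP=> y; rewrite !inE; case: (y == u); case: (y == v); case: (y == w); case: (y == z).
exact: spans_C4_of_arcs.
Qed.

Lemma cyclic_diamond_inj x y : cyclic_diamond t x -> cyclic_diamond t y ->
  quad_set x = quad_set y -> t x.1.2 x.2 = t y.1.2 y.2 -> x = y.
Proof.
case: x => [[[u v] w] z]; case: y => [[[u' v'] w'] z'] /=.
move=> /and3P[zw_neq uv /and4P[vw wu vz zu]] /and3P[zw_neq' uv' /and4P[vw' wu' vz' zu']].
move=> eq_uvwz orient.
have mem_uvwz y : y \in [set u'; v'; w'; z'] -> (y == u) || (y == v) || (y == w) || (y == z).
  by rewrite -eq_uvwz !inE.
have := mem_uvwz u'; have := mem_uvwz v'; have := mem_uvwz w'; have := mem_uvwz z'.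
rewrite !inE !eqxx ?orbT => /(_ isT) + /(_ isT) + /(_ isT) + /(_ isT).
case: (boolP (t w z)) orient => [wz | zw] orient.
  have wz' : t w' z' by rewrite -orient.
  by do 4 (move=> /orP[/orP[/orP[]|]|] /eqP ?; subst); first [by [] | arc_contra].
have {}zw : t z w by apply: tournament_total; rewrite // eq_sym.
move/esym/negbT: orient => zw'.
have {}zw' : t z' w' by apply: tournament_total; rewrite // eq_sym.
by do 4 (move=> /orP[/orP[/orP[]|]|] /eqP ?; subst); first [by [] | arc_contra].
Qed.

Lemma cyclic_diamond_fiber S :
  #|[set x | cyclic_diamond t x && (quad_set x == S)]| <=
  2 * ((#|S| == 4) && spans_copy C4 t S).
Proof.
case: (pickP (fun x => cyclic_diamond t x && (quad_set x == S))) => [x0 | no_diamond].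
  case/andP=> diamond_x0 /eqP <-.
  have spans_x0 := cyclic_diamond_spans_C4 diamond_x0.
  rewrite spans_x0 (spans_copy_card spans_x0) eqxx muln1.
  rewrite -(@card_in_imset _ _ (fun x => t x.1.2 x.2)); last first.
    move=> x y; rewrite !inE => /andP[diamond_x /eqP eq_x] /andP[diamond_y /eqP eq_y].
    by apply: cyclic_diamond_inj; rewrite ?eq_x ?eq_y.
  by rewrite -[2]card_bool max_card.
by rewrite -sum1dep_card big_pred0.
Qed.

Lemma cyclic_diamond_count : #|[set x | cyclic_diamond t x]| <= 2 * ncopies C4 t.
Proof.
rewrite (card_fibers _ (@quad_set m)) /ncopies -sum1dep_card big_distrr [X in _ <= X]big_mkcond /=.
apply: leq_sum => S _; have := cyclic_diamond_fiber S.
by case: ((#|S| == 4) && spans_copy C4 t S).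
Qed.

End CountingCopies.

Section ArcSums.

Import ssralg ssrnum ssrint GRing.Theory Num.Theory ring zify.
Local Open Scope ring_scope.

Definition indicator (b : bool) : int := b%:R.

Lemma indicator_idem b : indicator b * indicator b = indicator b.
Proof. by case: b; rewrite /indicator ?mulr1 ?mulr0. Qed.

Lemma indicator_neq (I : eqType) (x y : I) : indicator (x != y) = 1 - indicator (x == y).
Proof. by case: (x == y); rewrite /indicator ?subr0 ?subrr. Qed.

Lemma sum_indicator_eq n (F : 'I_n -> int) v : \sum_u F u * indicator (u == v) = F v.
Proof.
rewrite (bigD1 v) //= eqxx mulr1 big1 ?addr0 // => u /negbTE->.
by rewrite mulr0.
Qed.

Lemma sum_indicator_neq n (v : 'I_n) : \sum_u indicator (u != v) = n%:R - 1.
Proof.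
under eq_bigr do rewrite indicator_neq -[indicator _]mul1r.
by rewrite sumrB sum_indicator_eq sumr_const card_ord.
Qed.

Lemma sumr2D (I : finType) (F G : I -> I -> int) :
  \sum_u \sum_v (F u v + G u v) = \sum_u \sum_v F u v + \sum_u \sum_v G u v.
Proof. by rewrite -big_split; apply: eq_bigr => u _; rewrite big_split. Qed.

Lemma sumr2B (I : finType) (F G : I -> I -> int) :
  \sum_u \sum_v (F u v - G u v) = \sum_u \sum_v F u v - \sum_u \sum_v G u v.
Proof. by rewrite -sumrB; apply: eq_bigr => u _; rewrite sumrB. Qed.

Lemma sumr2Z (I : finType) a (F : I -> I -> int) :
  \sum_u \sum_v a * F u v = a * \sum_u \sum_v F u v.
Proof. by rewrite mulr_sumr; apply: eq_bigr => u _; rewrite mulr_sumr. Qed.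

Variables (m : nat) (t : rel 'I_m).
Hypothesis Ht : is_tournament t.

Definition arc u v := indicator (t u v).
Definition outdeg u := \sum_v arc u v.
Definition narcs := \sum_u outdeg u.
Definition sum_outdeg_sq := \sum_u outdeg u ^+ 2.
Definition ncyclic := \sum_u \sum_v \sum_w arc u v * arc v w * arc w u.
Definition ntransitive := \sum_u \sum_v \sum_w arc u v * arc v w * arc u w.
Definition ncyclic_on u v := \sum_w arc v w * arc w u.
Definition ndiamond := \sum_u \sum_v \sum_w \sum_z
  arc u v * (arc v w * arc w u) * (arc v z * arc z u) * indicator (z != w).

Lemma arc_loop u : arc u u = 0.
Proof. by rewrite /arc (negbTE (Ht.1 u)). Qed.

Lemma arc_pair u v : arc u v + arc v u = indicator (u != v).
Proof.
have [-> | neq_uv] := eqVneq u v; first by rewrite arc_loop addr0.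
by rewrite /arc (Ht.2 _ _ neq_uv); case: (t v u).
Qed.

Lemma arc_antisym u v : arc u v * arc v u = 0.
Proof.
have [-> | neq_uv] := eqVneq u v; first by rewrite arc_loop mul0r.
by rewrite /arc (Ht.2 _ _ neq_uv); case: (t v u); rewrite /indicator ?mulr0 ?mul0r.
Qed.

Lemma sum_arc_in v : \sum_u arc u v = m%:R - 1 - outdeg v.
Proof.
rewrite -(sum_indicator_neq v) /outdeg -sumrB.
by apply: eq_bigr => u _; rewrite -arc_pair addrK.
Qed.

Lemma sum_arcs_by_tail (F : 'I_m -> int) :
  \sum_u \sum_v arc u v * F u = \sum_u outdeg u * F u.
Proof. by apply: eq_bigr => u _; rewrite mulr_suml. Qed.

Lemma sum_arcs_by_head (F : 'I_m -> int) :
  \sum_u \sum_v arc u v * F v = \sum_v (m%:R - 1 - outdeg v) * F v.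
Proof. by rewrite exchange_big; apply: eq_bigr => v _; rewrite -mulr_suml sum_arc_in. Qed.

Lemma narcs_eq : narcs * 2 = m%:R * (m%:R - 1).
Proof.
have by_head : narcs = \sum_v (m%:R - 1 - outdeg v).
  by rewrite /narcs /outdeg exchange_big; apply: eq_bigr => v _; apply: sum_arc_in.
by rewrite mulr_natr mulr2n {1}by_head sumrB sumr_const card_ord -/narcs subrK mulr_natl.
Qed.

Lemma sum_arcs_sym (X : 'I_m -> 'I_m -> int) :
  (forall u v, X u v = X v u) -> (forall u, X u u = 0) ->
  (\sum_u \sum_v arc u v * X u v) * 2 = \sum_u \sum_v X u v.
Proof.
move=> X_sym X_loop; rewrite mulr_natr mulr2n {2}exchange_big -sumr2D.
apply: eq_bigr => u _; apply: eq_bigr => v _.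
rewrite (X_sym v u) -mulrDl arc_pair indicator_neq.
by have [-> | _] := eqVneq u v; rewrite ?X_loop /indicator ?mulr0 ?subr0 ?mul1r.
Qed.

Lemma ncyclic_eq : ncyclic = (m%:R - 1) * narcs - sum_outdeg_sq - ntransitive.
Proof.
(* each path u -> v -> w closes either to a cyclic or to a transitive triple *)
have path_split u v w : arc u v * arc v w * arc w u =
    arc u v * arc v w - arc u v * arc v w * indicator (w == u) - arc u v * arc v w * arc u w.
  by rewrite -[arc w u](addrK (arc u w)) arc_pair indicator_neq; ring.
have no_back_loop : \sum_u \sum_v \sum_w arc u v * arc v w * indicator (w == u) = 0.
  by apply: big1 => u _; apply: big1 => v _; rewrite sum_indicator_eq arc_antisym.
rewrite /ncyclic; under eq_bigr do under eq_bigr do under eq_bigr do rewrite path_split.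
under eq_bigr do rewrite !sumr2B.
rewrite !sumrB -/ntransitive no_back_loop subr0; congr (_ - _).
under eq_bigr do under eq_bigr do rewrite -mulr_sumr.
rewrite sum_arcs_by_head; under eq_bigr do rewrite mulrBl -expr2.
by rewrite sumrB -mulr_sumr.
Qed.

Lemma sum_outdeg_sq_eq : sum_outdeg_sq = ntransitive * 2 + narcs.
Proof.
(* the two out-neighbours v, w of u coincide or are joined by an arc *)
have pair_split u v w : arc u v * arc u w =
    arc u v * arc v w * arc u w + arc u v * arc u w * arc w v
    + arc u v * arc u w * indicator (w == v).
  by rewrite -[LHS]mulr1 -(subrK (indicator (w == v)) 1) -indicator_neq eq_sym -arc_pair; ring.
have -> : sum_outdeg_sq = \sum_u \sum_v \sum_w arc u v * arc u w.
  by apply: eq_bigr => u _; rewrite expr2 mulr_suml; apply: eq_bigr => v _; rewrite mulr_sumr.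
under eq_bigr do under eq_bigr do under eq_bigr do rewrite pair_split.
under eq_bigr do rewrite !sumr2D.
rewrite !big_split /= -/ntransitive mulr_natr mulr2n; congr (_ + _ + _).
  apply: eq_bigr => u _; rewrite exchange_big.
  by apply: eq_bigr => v _; apply: eq_bigr => w _; ring.
by apply: eq_bigr => u _; apply: eq_bigr => v _; rewrite sum_indicator_eq indicator_idem.
Qed.

Lemma sum_arcs_outdeg_diff_sq :
  (\sum_u \sum_v arc u v * (outdeg v - outdeg u) ^+ 2) * 2 =
  m%:R * sum_outdeg_sq * 2 - narcs * narcs * 2.
Proof.
have D_sym u v : (outdeg v - outdeg u) ^+ 2 = (outdeg u - outdeg v) ^+ 2.
  by rewrite -opprB sqrrN.
have D_loop u : (outdeg u - outdeg u) ^+ 2 = 0 by rewrite subrr expr0n.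
have expand u v : (outdeg v - outdeg u) ^+ 2 =
    outdeg v ^+ 2 + (-2) * (outdeg u * outdeg v) + outdeg u ^+ 2 by ring.
rewrite (sum_arcs_sym D_sym D_loop); under eq_bigr do under eq_bigr do rewrite expand.
rewrite !sumr2D sumr2Z sumr_const card_ord.
have -> : \sum_u \sum_v outdeg u * outdeg v = narcs * narcs.
  by rewrite mulr_suml; apply: eq_bigr => u _; rewrite mulr_sumr.
have -> : \sum_u \sum_(v : 'I_m) outdeg u ^+ 2 = sum_outdeg_sq * m%:R.
  by rewrite mulr_suml; apply: eq_bigr => u _; rewrite sumr_const card_ord mulr_natr.
by rewrite -/sum_outdeg_sq -mulr_natr; ring.
Qed.

Lemma sum_arcs_weight_sq :
  (\sum_u \sum_v arc u v * (m%:R + (outdeg v - outdeg u) * 2) ^+ 2) * 6 =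
  m%:R * m%:R * (m%:R - 1) * (m%:R - 2) + m%:R * ncyclic * 16.
Proof.
have expand u v : arc u v * (m%:R + (outdeg v - outdeg u) * 2) ^+ 2 =
    (m%:R * m%:R) * arc u v + (m%:R * 4) * (arc u v * outdeg v)
    + (- (m%:R * 4)) * (arc u v * outdeg u) + 4 * (arc u v * (outdeg v - outdeg u) ^+ 2).
  by ring.
under eq_bigr do under eq_bigr do rewrite expand.
rewrite !sumr2D !sumr2Z sum_arcs_by_head sum_arcs_by_tail.
have -> : \sum_u \sum_v arc u v = narcs by [].
have -> : \sum_v (m%:R - 1 - outdeg v) * outdeg v = (m%:R - 1) * narcs - sum_outdeg_sq.
  by under eq_bigr do rewrite mulrBl -expr2; rewrite sumrB -mulr_sumr.
have -> : \sum_u outdeg u * outdeg u = sum_outdeg_sq by under eq_bigr do rewrite -expr2.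
have := sum_arcs_outdeg_diff_sq; set A := \sum_u \sum_v _.
(* the products that make the remaining identity linear in the monomials *)
have := congr1 ( *%R^~ m%:R) ncyclic_eq; have := congr1 ( *%R^~ m%:R) sum_outdeg_sq_eq.
have := congr1 ( *%R^~ (m%:R * (m%:R - 2) - narcs * 12)) narcs_eq.
rewrite /=; lia.
Qed.

Lemma sum_cyclic_outdeg_diff :
  \sum_u \sum_v \sum_w arc u v * arc v w * arc w u * (outdeg v - outdeg u) = 0.
Proof.
under eq_bigr do under eq_bigr do under eq_bigr do rewrite mulrBr.
under eq_bigr do under eq_bigr do rewrite sumrB.
apply/eqP; rewrite sumr2B subr_eq0; apply/eqP.
(* rotate (u, v, w) to (w, u, v): the cyclic product is invariant *)
rewrite exchange_big; apply: eq_bigr => v _; rewrite exchange_big.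
apply: eq_bigr => w _; apply: eq_bigr => u _; congr (_ * _); ring.
Qed.

Lemma sum_arcs_weight_cyclic :
  \sum_u \sum_v arc u v * (m%:R + (outdeg v - outdeg u) * 2) * ncyclic_on u v =
  m%:R * ncyclic.
Proof.
have expand u v w : arc u v * (m%:R + (outdeg v - outdeg u) * 2) * (arc v w * arc w u) =
    m%:R * (arc u v * arc v w * arc w u)
    + 2 * (arc u v * arc v w * arc w u * (outdeg v - outdeg u)) by ring.
under eq_bigr do under eq_bigr do rewrite /ncyclic_on mulr_sumr.
under eq_bigr do under eq_bigr do under eq_bigr do rewrite expand.
under eq_bigr do rewrite sumr2D !sumr2Z.
by rewrite big_split /= -!mulr_sumr sum_cyclic_outdeg_diff mulr0 addr0.
Qed.

Lemma sum_arcs_ncyclic_on_sq :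
  \sum_u \sum_v arc u v * ncyclic_on u v ^+ 2 = ncyclic + ndiamond.
Proof.
rewrite /ncyclic /ndiamond -sumr2D; apply: eq_bigr => u _; apply: eq_bigr => v _.
rewrite expr2 /ncyclic_on mulr_suml mulr_sumr -big_split /=; apply: eq_bigr => w _.
have diag : arc u v * (arc v w * arc w u) * (arc v w * arc w u) = arc u v * arc v w * arc w u.
  by rewrite -mulrA mulrACA /arc !indicator_idem mulrA.
under [X in _ = _ + X]eq_bigr do rewrite indicator_neq mulrBr mulr1.
by rewrite sumrB sum_indicator_eq diag addrC subrK mulrA mulr_sumr.
Qed.

Lemma ncyclic_ndiamond_bound :
  m%:R * ncyclic * 80 <=
  m%:R * m%:R * (m%:R - 1) * (m%:R - 2) + ncyclic * 384 + ndiamond * 384.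
Proof.
suff : 0 <= \sum_u \sum_v
    arc u v * (m%:R + (outdeg v - outdeg u) * 2 - ncyclic_on u v * 8) ^+ 2.
  have expand u v : arc u v * (m%:R + (outdeg v - outdeg u) * 2 - ncyclic_on u v * 8) ^+ 2 =
      1 * (arc u v * (m%:R + (outdeg v - outdeg u) * 2) ^+ 2)
      + (-16) * (arc u v * (m%:R + (outdeg v - outdeg u) * 2) * ncyclic_on u v)
      + 64 * (arc u v * ncyclic_on u v ^+ 2) by ring.
  under eq_bigr do under eq_bigr do rewrite expand.
  rewrite !sumr2D !sumr2Z sum_arcs_weight_cyclic sum_arcs_ncyclic_on_sq.
  have := sum_arcs_weight_sq; set P := \sum_u _; lia.
apply: sumr_ge0 => u _; apply: sumr_ge0 => v _.
by rewrite mulr_ge0 ?sqr_ge0 // /arc /indicator ler0n.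
Qed.

Lemma card_indicator (T : finType) (P : pred T) :
  (#|[set x | P x]|)%:R = \sum_x indicator (P x).
Proof.
by rewrite -sum1dep_card natr_sum big_mkcond; apply: eq_bigr => x _; case: (P x).
Qed.

Lemma ncyclic_card : ncyclic = (#|[set x | cyclic_triple t x]|)%:R.
Proof.
rewrite card_indicator /ncyclic pair_bigA pair_bigA; apply: eq_bigr => [[[u v] w]] _ /=.
by rewrite /arc; case: (t u v); case: (t v w); case: (t w u); rewrite /indicator ?mulr0 ?mul0r ?mulr1.
Qed.

Lemma ndiamond_card : ndiamond = (#|[set x | cyclic_diamond t x]|)%:R.
Proof.
rewrite card_indicator /ndiamond pair_bigA pair_bigA pair_bigA.
apply: eq_bigr => [[[[u v] w] z]] _ /=; rewrite /arc.
by case: (z != w); case: (t u v); case: (t v w); case: (t w u); case: (t v z); case: (t z u);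
  rewrite /indicator ?mulr0 ?mul0r ?mulr1.
Qed.

Lemma copies_C3_C4_bound : (5 <= m)%nat ->
  (240 * m * ncopies C3 t <= m * m ^_ 3 + 1152 * ncopies C3 t + 768 * ncopies C4 t)%nat.
Proof.
move=> m_ge5; have [m_ge1 m_ge2] : (1 <= m /\ 2 <= m)%nat by lia.
have ffact3 : (m ^_ 3 = m * (m - 1) * (m - 2))%nat.
  by rewrite !ffactnSr ffactn0 mul1n subn0.
have bound : (m * #|[set x | cyclic_triple t x]| * 80 <= m * m ^_ 3 +
    #|[set x | cyclic_triple t x]| * 384 + #|[set x | cyclic_diamond t x]| * 384)%nat.
  rewrite ffact3 -(ler_nat int) !natrD !natrM !natrB // -ncyclic_card -ndiamond_card !mulrA.
  exact: ncyclic_ndiamond_bound.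
have := cyclic_diamond_count Ht; have := cyclic_triple_count Ht.
set k := #|[set x | cyclic_triple t x]| => k_ge.
have : ((m * 80 - 384) * (3 * ncopies C3 t) <= (m * 80 - 384) * k)%nat.
  by rewrite leq_mul2l k_ge orbT.
rewrite !mulnBl; lia.
Qed.

End ArcSums.

Local Open Scope R_scope.

Lemma INR_muln a b : INR (a * b)%nat = INR a * INR b.
Proof. by rewrite -multE mult_INR. Qed.

Lemma INR_addn a b : INR (a + b)%nat = INR a + INR b.
Proof. by rewrite -plusE plus_INR. Qed.

Lemma INR_leq a b : (a <= b)%nat -> INR a <= INR b.
Proof. by move/leP; apply: le_INR. Qed.

Lemma density_bound (m b3 b4 n3 n4 : R) :
  0 < m -> 0 < b3 -> 0 < b4 -> 0 <= n4 -> n3 <= b3 -> 4 * b4 <= m * b3 ->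
  240 * m * n3 <= m * (b3 * 6) + 1152 * n3 + 768 * n4 ->
  40 * (n3 / b3) <= 32 * (n4 / b4) + 1 + 192 / m.
Proof.
move=> m_gt0 b3_gt0 b4_gt0 n4_ge0 n3_le b4_le bound.
have p4_ge0 : 0 <= n4 / b4 by apply: Rle_mult_inv_pos.
have n4_le : 768 * n4 <= 192 * (n4 / b4) * (m * b3).
  have -> : 768 * n4 = 192 * (n4 / b4) * (4 * b4) by field; lra.
  by apply: Rmult_le_compat_l; first lra.
apply: (Rmult_le_reg_r (6 * m * b3)); first by apply: Rmult_lt_0_compat; lra.
have -> : 40 * (n3 / b3) * (6 * m * b3) = 240 * m * n3 by field; lra.
have -> : (32 * (n4 / b4) + 1 + 192 / m) * (6 * m * b3) =
  192 * (n4 / b4) * (m * b3) + m * (b3 * 6) + 1152 * b3 by field; lra.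
lra.
Qed.

Lemma ncopies_le_bin k m (h : rel 'I_k) (t : rel 'I_m) : (ncopies h t <= 'C(m, k))%nat.
Proof.
rewrite /ncopies -[m in 'C(m, _)]card_ord -card_draws.
by apply/subset_leq_card/subsetP => S; rewrite !inE => /andP[->].
Qed.

Lemma pr_C3_C4_bound m (t : rel 'I_m) : is_tournament t -> (5 <= m)%nat ->
  40 * pr C3 t <= 32 * pr C4 t + 1 + 192 / INR m.
Proof.
move=> Ht m_ge5.
have bin3 : (m * m ^_ 3 = m * ('C(m, 3) * 6))%nat by rewrite -bin_ffact.
have bin4 : (4 * 'C(m, 4) <= m * 'C(m, 3))%nat.
  by rewrite (mul_bin_left m 3) leq_mul2r leq_subr orbT.
have INR_pos n : (0 < n)%nat -> 0 < INR n by move/ltP; apply: lt_0_INR.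
have lit n : INR n = IZR (Z.of_nat n) := INR_IZR_INZ n.
have := copies_C3_C4_bound Ht m_ge5; rewrite bin3 => /INR_leq.
rewrite !(INR_addn, INR_muln) (lit 240%nat) (lit 1152%nat) (lit 768%nat) (lit 6%nat) /= => bound.
apply: density_bound => //.
- by apply: INR_pos; lia.
- by apply: INR_pos; rewrite bin_gt0; lia.
- by apply: INR_pos; rewrite bin_gt0; lia.
- exact: pos_INR.
- exact/INR_leq/ncopies_le_bin.
- by move/INR_leq: bin4; rewrite !INR_muln (lit 4%nat).
Qed.

Lemma Un_cv_const (c : R) : Un_cv (fun=> c) c.
Proof. by move=> e e_gt0; exists 0%nat => n _; rewrite /R_dist Rminus_eq_0 Rabs_R0. Qed.

Lemma Un_cv_le_eventually (u v : nat -> R) l1 l2 N :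
  (forall n, (N <= n)%coq_nat -> u n <= v n) -> Un_cv u l1 -> Un_cv v l2 -> l1 <= l2.
Proof.
move=> le_uv cv_u cv_v.
apply: (@Rle_cv_lim (fun n => u (n + N)%coq_nat) (fun n => v (n + N)%coq_nat)).
- by move=> n; apply: le_uv; lia.
- exact: CV_shift'.
- exact: CV_shift'.
Qed.

Lemma Un_cv_inv_INR (m : nat -> nat) :
  (forall M, exists N, forall n, (N <= n)%coq_nat -> (M <= m n)%coq_nat) ->
  Un_cv (fun n => / INR (m n)) 0.
Proof.
move=> m_unbounded; apply: cv_infty_cv_0 => M.
have [k k_gt] := INR_unbounded M; have [N m_ge] := m_unbounded k.
by exists N => n /m_ge /le_INR; lra.
Qed.

Theorem corollary2p6
  (m : nat -> nat) (T : forall n : nat, rel 'I_(m n)) (c3 c4 : R) :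
  (forall n, is_tournament (T n)) ->
  (forall M : nat, exists N : nat, forall n : nat, (N <= n)%coq_nat -> (M <= m n)%coq_nat) ->
  Un_cv (fun n => pr C3 (T n)) c3 ->
  Un_cv (fun n => pr C4 (T n)) c4 ->
  (1 / 16 <= c3)%R ->
  (3 / 64 <= c4)%R.
Proof.
move=> T_tour m_unbounded cv3 cv4 c3_ge.
suff : 40 * c3 <= 32 * c4 + 1 + 192 * 0 by lra.
have [N m_ge5] := m_unbounded 5%nat.
apply: (@Un_cv_le_eventually (fun n => 40 * pr C3 (T n))
  (fun n => 32 * pr C4 (T n) + 1 + 192 / INR (m n)) _ _ N).
- by move=> n /m_ge5 /leP; apply: pr_C3_C4_bound.
- exact: CV_mult (Un_cv_const 40) cv3.
- apply: CV_plus; first apply: CV_plus; first apply: CV_mult.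
  + exact: Un_cv_const.
  + exact: cv4.
  + exact: Un_cv_const.
  + apply: CV_mult; [exact: Un_cv_const | exact: Un_cv_inv_INR].
Qed.
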